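(* Let $K\ge1$, $\beta_1\in(0,1)$, $\rho_1>0$, and let $\alpha_1\ge\cdots\ge\alpha_K>0$ be non-increasing. Define $\eta_1=\frac{\alpha_1}{1-\beta_1}$ if $\alpha_k=\alpha_1$ for all $k\in[K]$, and $\eta_1=\sum_{i=1}^K\alpha_i\beta_1^{i-1}$ otherwise; and for $2\le k\le K$ define recursively $$\eta_k=\frac{\eta_{k-1}-\alpha_{k-1}}{\beta_1},\qquad \rho_k=\frac{\rho_{k-1}}{\beta_1+\frac{\alpha_{k-1}}{\eta_k}}.$$ Then $\{\rho_j\}_{j=1}^K$ is non-increasing, $$\frac{\sum_{k=j-1}^t\alpha_k\beta_1^{k-(j-1)}}{\rho_{j-1}}-\frac{\sum_{k=j}^t\alpha_k\beta_1^{k-j}}{\rho_j}\ge 0\quad\text{for all }2\le j\le t\le K,$$ and $$\rho_j\le\frac{\rho_1\alpha_j}{\alpha_1(1-\beta_1)}\quad\text{for all }j\in[K].$$ Moreover, if $\alpha_j=\alpha_1$ for all $j\in[K]$, then $\eta_j=\frac{\alpha_1}{1-\beta_1}$ and $\rho_j=\rho_1$ for all $j\in[K]$.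
   Context: $[K]=\{1,\dots,K\}$. *)

(* R is an arbitrary real field. Sequences alpha are indexed by nat; only indices 1..K matter. *)
From mathcomp Require Import all_boot all_order all_algebra.
Set Implicit Arguments. Unset Strict Implicit. Unset Printing Implicit Defensive.
Import Order.TTheory GRing.Theory Num.Theory.
Local Open Scope ring_scope.

Section Defs.
Variables (R : realFieldType) (K : nat) (alpha : nat -> R) (beta1 rho1 : R).

Definition alpha_const : bool := [forall k : 'I_K, alpha k.+1 == alpha 1%N].

Definition eta1 : R :=
  if alpha_const then alpha 1%N / (1 - beta1)
  else \sum_(1 <= i < K.+1) alpha i * beta1 ^+ (i - 1).

(* eta_k for k >= 1 (value at 0 is irrelevant) *)
Fixpoint eta (k : nat) : R :=
  match k with
  | 0 => eta1
  | 1 => eta1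
  | k'.+1 => (eta k' - alpha k') / beta1
  end.

(* rho_k for k >= 1 (value at 0 is irrelevant) *)
Fixpoint rho (k : nat) : R :=
  match k with
  | 0 => rho1
  | 1 => rho1
  | k'.+1 => rho k' / (beta1 + alpha k' / eta k'.+1)
  end.
End Defs.

From mathcomp Require Import all_boot all_order all_algebra.
From mathcomp Require Import zify ring lra.
Import Order.TTheory GRing.Theory Num.Theory.
Local Open Scope ring_scope.

(* The whole argument is carried by eta.  Read backwards, its recursion is
   eta_j = alpha_j + beta1 * eta_{j+1}; unrolling it from eta_1 shows that
   eta_{K+1} = 0 when the alpha_k are not all equal, and that eta is the
   constant alpha_1 / (1 - beta1) when they are.  In both cases
   0 <= eta_{K+1} and (1 - beta1) eta_{K+1} <= alpha_K, and a backward
   induction from K+1 yields eta_j > 0, (1 - beta1) eta_j <= alpha_j, eta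
   non-increasing, and every tail sum sum_{k=j}^t alpha_k beta1^(k-j) <= eta_j.
   Since beta1 + alpha_k / eta_{k+1} = eta_k / eta_{k+1}, the recursion for
   rho telescopes to rho_k = rho1 * eta_k / eta_1.  The four claims follow:
   rho inherits the monotonicity of eta; the gap inequality is an explicit
   fraction with numerator alpha_{j-1} (eta_j - tail sum); the upper bound
   combines (1 - beta1) eta_j <= alpha_j with alpha_1 <= eta_1; the constant
   case is read off the closed forms. *)

Lemma down_ind (P : nat -> Prop) (m n : nat) :
  P n -> (forall j, (m <= j < n)%N -> P j.+1 -> P j) ->
  forall j, (m <= j <= n)%N -> P j.
Proof.
move=> Pn step.
suff H d : forall j, (m <= j)%N -> (j + d)%N = n -> P j.
  by move=> j /andP[mj jn]; apply: (H (n - j)%N) => //; rewrite subnKC.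
elim: d => [|d IH] j mj; first by rewrite addn0 => ->.
move=> jdn; apply: step; first by apply/andP; lia.
by apply: IH; lia.
Qed.

Section Recurrences.
Local Set Implicit Arguments. Local Unset Strict Implicit.
Variables (R : realFieldType) (K : nat) (alpha : nat -> R) (beta1 rho1 : R).

Lemma tail_sum_split m n : (m <= n)%N ->
  \sum_(m <= k < n.+1) alpha k * beta1 ^+ (k - m)
  = alpha m + beta1 * \sum_(m.+1 <= k < n.+1) alpha k * beta1 ^+ (k - m.+1).
Proof.
move=> hmn; rewrite big_ltn ?ltnS // subnn expr0 mulr1 big_distrr /=.
congr (_ + _); apply: eq_big_nat => k /andP[hk _].
have -> : (k - m = (k - m.+1).+1)%N by lia.
by rewrite exprS mulrCA.
Qed.

Hypothesis beta1_neq0 : beta1 != 0.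

Local Notation eta_ := (eta K alpha beta1).
Local Notation rho_ := (rho K alpha beta1 rho1).

Lemma eta_step j : (1 <= j)%N -> eta_ j = alpha j + beta1 * eta_ j.+1.
Proof. by case: j => [//|[|j]] _ /=; field. Qed.

Lemma eta_telescope j : (1 <= j)%N ->
  beta1 ^+ j.-1 * eta_ j = eta1 K alpha beta1 - \sum_(1 <= i < j) alpha i * beta1 ^+ i.-1.
Proof.
elim: j => [//|[|j] IH] _; first by rewrite big_geq // expr0 mul1r subr0.
rewrite big_nat_recr //= opprD addrA -IH // (@eta_step j.+1) //= exprS.
ring.
Qed.

Lemma alpha_constP :
  reflect (forall k, (1 <= k <= K)%N -> alpha k = alpha 1%N) (alpha_const K alpha).
Proof.
apply: (iffP forallP) => [h [//|k] /andP[_ hk] | h k].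
  exact/eqP/(h (Ordinal hk)).
by apply/eqP/h; rewrite ltn_ord.
Qed.

Lemma eta_const : 1 - beta1 != 0 -> alpha_const K alpha ->
  forall j, (1 <= j <= K.+1)%N -> eta_ j = alpha 1%N / (1 - beta1).
Proof.
move=> b1_neq0 /alpha_constP hal.
elim=> [//|[|j] IH] /andP[_ hj]; first by rewrite /= /eta1 (introT alpha_constP hal).
have -> : eta_ j.+2 = (eta_ j.+1 - alpha j.+1) / beta1 by [].
rewrite IH ?hal ?(ltnW hj) //.
by field; rewrite b1_neq0.
Qed.

(* Otherwise eta_1 is the full discounted sum, which the telescoping
   identity exhausts exactly at index K+1. *)
Lemma eta_last_nonconst : ~~ alpha_const K alpha -> eta_ K.+1 = 0.
Proof.
move=> /negbTE hc; have := eta_telescope (ltn0Sn K).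
have -> : eta1 K alpha beta1 = \sum_(1 <= i < K.+1) alpha i * beta1 ^+ i.-1.
  by rewrite /eta1 hc; apply: eq_bigr => i _; rewrite subn1.
rewrite subrr => /eqP; rewrite mulf_eq0 expf_eq0 (negbTE beta1_neq0) andbF.
exact: eqP.
Qed.

(* beta1 + alpha_k / eta_{k+1} = eta_k / eta_{k+1}, so each rho step is a
   ratio of consecutive eta's. *)
Lemma rho_step k : (1 <= k)%N -> eta_ k.+1 != 0 ->
  rho_ k.+1 = rho_ k * eta_ k.+1 / eta_ k.
Proof.
move=> hk hne.
have -> : rho_ k.+1 = rho_ k / (beta1 + alpha k / eta_ k.+1) by case: k hk hne => [|[|k]].
have -> : beta1 + alpha k / eta_ k.+1 = eta_ k / eta_ k.+1.
  by rewrite (eta_step hk); field.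
by rewrite invf_div mulrA.
Qed.

Lemma rho_closed : (forall j, (1 <= j <= K)%N -> eta_ j != 0) ->
  forall k, (1 <= k <= K)%N -> rho_ k = rho1 * eta_ k / eta_ 1%N.
Proof.
move=> hne; elim=> [//|[|k] IH] /andP[_ hk].
  by have := hne 1%N hk; rewrite /= => ne1; field.
rewrite rho_step ?hne // IH ?(ltnW hk) //.
have h1 : eta_ 1%N != 0 by apply: hne; lia.
have h2 : eta_ k.+1 != 0 by apply: hne; lia.
by field; rewrite h1 h2.
Qed.

End Recurrences.

Section Monotonicity.
Local Set Implicit Arguments. Local Unset Strict Implicit.
Variables (R : realFieldType) (K : nat) (alpha : nat -> R) (beta1 rho1 : R).
Hypothesis K_ge1 : (1 <= K)%N.
Hypotheses (beta1_gt0 : 0 < beta1) (beta1_lt1 : beta1 < 1) (rho1_gt0 : 0 < rho1).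
Hypothesis alpha_gt0 : forall k, (1 <= k <= K)%N -> 0 < alpha k.
Hypothesis alpha_nonincr :
  forall i j, (1 <= i)%N -> (i <= j)%N -> (j <= K)%N -> alpha j <= alpha i.

Local Notation eta_ := (eta K alpha beta1).
Local Notation rho_ := (rho K alpha beta1 rho1).

Let beta1_neq0 : beta1 != 0. Proof. by rewrite gt_eqF. Qed.
Let gap_gt0 : 0 < 1 - beta1. Proof. by rewrite subr_gt0. Qed.
Let alpha_ge0 k : (1 <= k <= K)%N -> 0 <= alpha k.
Proof. by move=> hk; rewrite ltW ?alpha_gt0. Qed.

Lemma eta_last_bounds : 0 <= eta_ K.+1 /\ (1 - beta1) * eta_ K.+1 <= alpha K.
Proof.
have aK : 0 <= alpha K by rewrite alpha_ge0 // K_ge1 leqnn.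
have [hc|/(eta_last_nonconst beta1_neq0) ->] := boolP (alpha_const K alpha); last first.
  by rewrite mulr0 lexx.
have /alpha_constP hal := hc.
rewrite eta_const ?gt_eqF //; last by rewrite leqnn.
rewrite -(hal K) ?K_ge1 ?leqnn //.
by split; [rewrite divr_ge0 // ltW | rewrite mulrC divfK ?gt_eqF].
Qed.

(* eta_j is a non-negative combination of alpha_j and eta_{j+1}. *)
Lemma eta_ge0 j : (1 <= j <= K.+1)%N -> 0 <= eta_ j.
Proof.
move: j; apply: down_ind => [|j hj ej1]; first by case: eta_last_bounds.
rewrite (eta_step K alpha beta1_neq0) ?(andP hj).1 //.
by rewrite addr_ge0 ?mulr_ge0 ?(ltW beta1_gt0) ?alpha_ge0 //; lia.
Qed.

(* (1 - beta1) eta_j <= alpha_j, i.e. eta_j is at most the value it would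
   have if all later weights equalled alpha_j. *)
Lemma eta_bound j : (1 <= j <= K)%N -> (1 - beta1) * eta_ j <= alpha j.
Proof.
have step a i : (1 <= i)%N -> (1 - beta1) * eta_ i.+1 <= a -> a <= alpha i ->
    (1 - beta1) * eta_ i <= alpha i.
  move=> hi hle hai; rewrite (eta_step K alpha beta1_neq0 hi).
  have := ler_wpM2l (ltW beta1_gt0) (le_trans hle hai); lra.
move: j; apply: down_ind => [|j hj hle].
  by case: eta_last_bounds => _ /step; apply; rewrite ?lexx.
apply: step hle _; first by case/andP: hj.
by apply: alpha_nonincr; lia.
Qed.

Lemma eta_gt0 j : (1 <= j <= K)%N -> 0 < eta_ j.
Proof.
move=> hj; rewrite (eta_step K alpha beta1_neq0) ?(andP hj).1 //.
by rewrite ltr_wpDr ?alpha_gt0 ?mulr_ge0 ?(ltW beta1_gt0) ?eta_ge0 //; lia.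
Qed.

(* One step of the backward recurrence: eta_{k+1} <= eta_k, since
   (1 - beta1) eta_{k+1} <= alpha_{k+1} <= alpha_k. *)
Lemma eta_succ_le k : (1 <= k)%N -> (k < K)%N -> eta_ k.+1 <= eta_ k.
Proof.
move=> hk hkK; rewrite [leRHS](eta_step K alpha beta1_neq0 hk).
have hk1 : (1 <= k.+1 <= K)%N by rewrite hkK.
have := le_trans (eta_bound hk1) (alpha_nonincr hk (leqnSn k) hkK).
lra.
Qed.

Lemma eta_nonincr i j : (1 <= i)%N -> (i <= j)%N -> (j <= K)%N -> eta_ j <= eta_ i.
Proof.
move=> hi hij hjK; pose D := [pred k | 1 <= k <= K]%N.
have convD : {in D &, forall a b c, (a < c < b)%N -> c \in D}.
  by move=> a b; rewrite !inE /= => ? ? c ?; rewrite inE /=; lia.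
have stepD : {in D, forall k, k.+1 \in D -> eta_ k.+1 <= eta_ k}.
  by move=> k /andP[hk _] /andP[_ hkK]; apply: eta_succ_le.
have iD : i \in D by rewrite inE /= hi (leq_trans hij).
have jD : j \in D by rewrite inE /= hjK (leq_trans hi).
exact: (homo_leq_in (r := fun x y => y <= x) (@lexx _ _) ge_trans convD stepD iD jD hij).
Qed.

Lemma rho_eta k : (1 <= k <= K)%N -> rho_ k = rho1 * eta_ k / eta_ 1%N.
Proof. by apply: (rho_closed rho1 beta1_neq0) => j hj; rewrite gt_eqF ?eta_gt0. Qed.

Lemma tail_sum_le_eta t : (t <= K)%N ->
  forall j, (1 <= j <= t.+1)%N -> \sum_(j <= k < t.+1) alpha k * beta1 ^+ (k - j) <= eta_ j.
Proof.
move=> htK; apply: down_ind => [|j /andP[hj1 hjt] IH].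
  by rewrite big_geq // eta_ge0 // ltnS htK.
rewrite tail_sum_split // (eta_step K alpha beta1_neq0 hj1) lerD2l.
by rewrite ler_wpM2l // ltW.
Qed.

Lemma rho_nonincr i j : (1 <= i)%N -> (i <= j)%N -> (j <= K)%N -> rho_ j <= rho_ i.
Proof.
move=> hi hij hjK; have hiK := leq_trans hij hjK; have hj := leq_trans hi hij.
rewrite !rho_eta ?hi ?hj //.
have e1_gt0 : 0 < eta_ 1%N by rewrite eta_gt0 ?K_ge1.
by rewrite ler_pM2r ?invr_gt0 // ler_pM2l // eta_nonincr.
Qed.

(* Second claim, for j = i+1: the difference equals
   eta_1 alpha_i (eta_{i+1} - S) / (rho1 eta_i eta_{i+1}), with S the tail sum
   from i+1, which is non-negative by tail_sum_le_eta. *)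
Lemma rho_tail_gap i t : (1 <= i)%N -> (i < t)%N -> (t <= K)%N ->
  0 <= (\sum_(i <= k < t.+1) alpha k * beta1 ^+ (k - i)) / rho_ i
       - (\sum_(i.+1 <= k < t.+1) alpha k * beta1 ^+ (k - i.+1)) / rho_ i.+1.
Proof.
move=> hi hit htK; have hiK := ltnW (leq_trans hit htK).
rewrite tail_sum_split ?(ltnW hit) // !rho_eta ?hi ?hiK ?(leq_trans hit htK) //.
set S := \sum_(i.+1 <= k < t.+1) _.
have hS : S <= eta_ i.+1 by apply: tail_sum_le_eta => //; exact: ltnW.
have e1_gt0 : 0 < eta_ 1%N by rewrite eta_gt0 ?K_ge1.
have e'_gt0 : 0 < eta_ i.+1 by rewrite eta_gt0 // (leq_trans hit htK).
have a_gt0 : 0 < alpha i by rewrite alpha_gt0 ?hi.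
rewrite (eta_step K alpha beta1_neq0 hi).
have den_gt0 : 0 < alpha i + beta1 * eta_ i.+1 by rewrite ltr_wpDr ?mulr_ge0 ?ltW.
have -> : (alpha i + beta1 * S) / (rho1 * (alpha i + beta1 * eta_ i.+1) / eta_ 1%N)
          - S / (rho1 * eta_ i.+1 / eta_ 1%N)
    = eta_ 1%N * alpha i * (eta_ i.+1 - S) / (rho1 * (alpha i + beta1 * eta_ i.+1) * eta_ i.+1).
  by field; rewrite !gt_eqF.
have num_ge0 : 0 <= eta_ 1%N * alpha i * (eta_ i.+1 - S).
  by rewrite mulr_ge0 ?subr_ge0 // ltW // mulr_gt0.
by rewrite divr_ge0 // ltW // !mulr_gt0.
Qed.

(* eta_1 = alpha_1 + beta1 eta_2 with eta_2 >= 0. *)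
Lemma alpha1_le_eta1 : alpha 1%N <= eta_ 1%N.
Proof.
rewrite (eta_step K alpha beta1_neq0 (leqnn 1)) lerDl mulr_ge0 ?(ltW beta1_gt0) //.
by rewrite eta_ge0 // ltnS K_ge1.
Qed.

Lemma rho_le_bound j : (1 <= j <= K)%N ->
  rho_ j <= rho1 * alpha j / (alpha 1%N * (1 - beta1)).
Proof.
move=> hj; have hK1 : (1 <= 1 <= K)%N by rewrite K_ge1.
have e1_gt0 := eta_gt0 hK1; have a1_gt0 := alpha_gt0 hK1.
have den_gt0 : 0 < alpha 1%N * (1 - beta1) by rewrite mulr_gt0.
rewrite rho_eta // -!mulrA ler_pM2l // ler_pdivrMr // mulrAC ler_pdivlMr //.
have := ler_wpM2l (ltW a1_gt0) (eta_bound hj).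
have := ler_wpM2l (ltW (alpha_gt0 hj)) alpha1_le_eta1.
lra.
Qed.

Lemma rho_const : (forall j, (1 <= j <= K)%N -> alpha j = alpha 1%N) ->
  forall j, (1 <= j <= K)%N -> eta_ j = alpha 1%N / (1 - beta1) /\ rho_ j = rho1.
Proof.
move=> /alpha_constP hc j hj.
have eta_c k : (1 <= k <= K)%N -> eta_ k = alpha 1%N / (1 - beta1).
  by move=> /andP[hk1 hkK]; rewrite eta_const ?gt_eqF // hk1 ltnW.
have c_gt0 : 0 < alpha 1%N / (1 - beta1) by rewrite divr_gt0 // alpha_gt0 ?K_ge1.
split; first exact: eta_c.
by rewrite rho_eta // !eta_c ?K_ge1 // mulfK ?gt_eqF.
Qed.

End Monotonicity.

Theorem lemma2 (R : realFieldType) (K : nat) (alpha : nat -> R) (beta1 rho1 : R)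
  (hK : (1 <= K)%N)
  (hb0 : 0 < beta1) (hb1 : beta1 < 1)
  (hrho : 0 < rho1)
  (hpos : forall k, (1 <= k <= K)%N -> 0 < alpha k)
  (hmono : forall i j, (1 <= i)%N -> (i <= j)%N -> (j <= K)%N -> alpha j <= alpha i) :
  (forall i j, (1 <= i)%N -> (i <= j)%N -> (j <= K)%N ->
     rho K alpha beta1 rho1 j <= rho K alpha beta1 rho1 i)
  /\ (forall j t, (2 <= j)%N -> (j <= t)%N -> (t <= K)%N ->
     0 <= (\sum_(j.-1 <= k < t.+1) alpha k * beta1 ^+ (k - j.-1)) / rho K alpha beta1 rho1 j.-1
          - (\sum_(j <= k < t.+1) alpha k * beta1 ^+ (k - j)) / rho K alpha beta1 rho1 j)
  /\ (forall j, (1 <= j <= K)%N ->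
     rho K alpha beta1 rho1 j <= rho1 * alpha j / (alpha 1%N * (1 - beta1)))
  /\ ((forall j, (1 <= j <= K)%N -> alpha j = alpha 1%N) ->
      forall j, (1 <= j <= K)%N ->
        eta K alpha beta1 j = alpha 1%N / (1 - beta1) /\ rho K alpha beta1 rho1 j = rho1).
Proof.
split; first by move=> i j; apply: rho_nonincr.
split; first by case=> [|i] // t hi hit htK; apply: rho_tail_gap.
split; first by move=> j; apply: rho_le_bound.
by apply: rho_const.
Qed.
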